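(* Let $X$ be a regular, $\omega_1$-expandable, Baire $\sigma$-space. Then $dis(X)\geq\Delta(X)$.
   Context: All spaces are Hausdorff. $dis(X)$ is the least number of discrete subspaces needed to cover $X$; $\Delta(X)$ is the least cardinality of a non-empty open subset of $X$. A $\sigma$-space is a space having a $\sigma$-discrete network (a network being a family $\mathcal{N}$ of subsets such that for every open $U$ and $x\in U$ there is $N\in\mathcal{N}$ with $x\in N\subseteq U$). For a collection $\mathcal{G}$ of subsets, $ord(x,\mathcal{G})=|\{G\in\mathcal{G}:x\in G\}|$. $X$ is $\omega_1$-expandable if for every closed discrete set $D\subseteq X$ there is a family $\mathcal{G}=\{U_d: d\in D\}$ of open sets with $U_d\cap D=\{d\}$ for each $d\in D$ and $ord(x,\mathcal{G})\leq\omega_1$ for every $x\in X$. *)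

From Stdlib Require Import Classical.

Definition set (X : Type) := X -> Prop.

Record topology (X : Type) := Topology {
  open : set X -> Prop;
  open_full : open (fun _ => True);
  open_inter : forall U V, open U -> open V -> open (fun x => U x /\ V x);
  open_union : forall F : set (set X), (forall U, F U -> open U) ->
                 open (fun x => exists U, F U /\ U x)
}.
Arguments open {X} t U.

Section Topo.
Context {X : Type} (t : topology X).

Definition closed (C : set X) : Prop := open t (fun x => ~ C x).

Definition closure (A : set X) : set X :=
  fun x => forall U, open t U -> U x -> exists y, U y /\ A y.

Definition dense (A : set X) : Prop := forall x, closure A x.

Definition hausdorff : Prop :=
  forall x y, x <> y -> exists U V, open t U /\ open t V /\ U x /\ V y /\
    (forall z, ~ (U z /\ V z)).

Definition regular : Prop :=
  forall (C : set X) x, closed C -> ~ C x ->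
    exists U V, open t U /\ open t V /\ U x /\ (forall z, C z -> V z) /\
      (forall z, ~ (U z /\ V z)).

Definition baire : Prop :=
  forall G : nat -> set X, (forall n, open t (G n)) -> (forall n, dense (G n)) ->
    dense (fun x => forall n, G n x).

Definition discrete_subspace (A : set X) : Prop :=
  forall x, A x -> exists U, open t U /\ U x /\ (forall y, U y -> A y -> y = x).

Definition closed_discrete (D : set X) : Prop := closed D /\ discrete_subspace D.

Definition discrete_family (F : set (set X)) : Prop :=
  forall x, exists W, open t W /\ W x /\
    (forall N1 N2, F N1 -> F N2 -> (exists y, W y /\ N1 y) ->
       (exists y, W y /\ N2 y) -> N1 = N2).

Definition network (F : set (set X)) : Prop :=
  forall U x, open t U -> U x -> exists N, F N /\ N x /\ (forall y, N y -> U y).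

Definition sigma_space : Prop :=
  exists Fn : nat -> set (set X), (forall n, discrete_family (Fn n)) /\
    network (fun N => exists n, Fn n N).
End Topo.

Definition countable_set {T : Type} (S : set T) : Prop :=
  exists f : T -> nat, forall x y, S x -> S y -> f x = f y -> x = y.

(* |S| <= omega_1 : S carries a well-order all of whose proper initial
   segments are countable (i.e. its order type is <= omega_1). *)
Definition card_le_omega1 {T : Type} (S : set T) : Prop :=
  exists R : T -> T -> Prop,
    (forall x, S x -> ~ R x x) /\
    (forall x y z, S x -> S y -> S z -> R x y -> R y z -> R x z) /\
    (forall x y, S x -> S y -> x = y \/ R x y \/ R y x) /\
    (forall P : set T, (forall x, P x -> S x) -> (exists x, P x) ->
        exists m, P m /\ forall x, P x -> ~ R x m) /\
    (forall y, S y -> countable_set (fun x => S x /\ R x y)).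

Definition omega1_expandable {X : Type} (t : topology X) : Prop :=
  forall D : set X, closed_discrete t D ->
    exists U : X -> set X,
      (forall d, D d -> open t (U d)) /\
      (forall d, D d -> forall y, (U d y /\ D y) <-> y = d) /\
      (forall x, card_le_omega1 (fun d => D d /\ U d x)).

(* dis(X) >= Delta(X): for every cover of X by discrete subspaces indexed by
   a type I, some non-empty open set has cardinality <= |I|. *)
Definition dis_ge_Delta {X : Type} (t : topology X) : Prop :=
  forall (I : Type) (A : I -> set X),
    (forall i, discrete_subspace t (A i)) -> (forall x, exists i, A i x) ->
    exists U : set X, open t U /\ (exists x, U x) /\
      exists f : X -> I, forall x y, U x -> U y -> f x = f y -> x = y.

(* Zorn's lemma (imported from mathcomp-classical) yields
   comparability of cardinals and Hessenberg's theorem |I x I| = |I| for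
   infinite I; hence an uncountable I absorbs I x nat x I x I, and every set of
   size at most omega_1 injects into it.

   A sigma-discrete network labels each point x by an index ix x
   with A (ix x) x and a level nx x, so that each level set
   {ix = i, nx = m} is closed discrete, and locally each level [nx = m] has at
   most one point per label.  If X has an isolated point we are done.  If I is
   countable, the level sets form a countable cover by closed discrete sets, so
   by Baire one of them has interior, producing an isolated point.  If I is
   uncountable, Baire makes some level dense in an open set, and points of a
   small open subset are coded injectively in I using omega_1-expansions of the
   level sets (lemma [uncountable_labels_small_open]). *)

From Stdlib Require Import Classical ClassicalEpsilon FunctionalExtensionality PropExtensionality Cantor.
From mathcomp Require classical_sets.

Definition sub {T} (A B : set T) : Prop := forall x, A x -> B x.

Definition union {T} (C : set (set T)) : set T := fun x => exists A, C A /\ A x.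

Definition chain {T} (C : set (set T)) : Prop :=
  forall A B, C A -> C B -> sub A B \/ sub B A.

Definition injective {A B} (f : A -> B) : Prop := forall x y, f x = f y -> x = y.

Definition inj_on {A B} (P : set A) (f : A -> B) : Prop :=
  forall x y, P x -> P y -> f x = f y -> x = y.

Lemma set_ext {T} (A B : set T) : sub A B -> sub B A -> A = B.
Proof.
  intros AB BA. apply functional_extensionality. intro x.
  apply propositional_extensionality. split; [apply AB | apply BA].
Qed.

Lemma choice_on {A B} (b0 : B) (P : set A) (R : A -> B -> Prop) :
  (forall a, P a -> exists b, R a b) -> exists f : A -> B, forall a, P a -> R a (f a).
Proof.
  intro H. apply (choice (fun a b => P a -> R a b)). intro a.
  destruct (classic (P a)) as [Pa|nPa].
  - destruct (H a Pa) as [b Rab]. exists b. intros _. exact Rab.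
  - exists b0. intro Pa. contradiction.
Qed.

(* It follows from
   the library's [Zorn_bigcup] applied to the sets [A] with [M0 \/ A] in [F]. *)
Lemma zorn_above {T} (F : set (set T)) (M0 : set T) :
  F M0 ->
  (forall C, (forall A, C A -> F A) -> (exists A, C A) -> chain C -> F (union C)) ->
  exists M, F M /\ sub M0 M /\ forall N, F N -> sub M N -> sub N M.
Proof.
  intros FM0 Fchain.
  pose (above := fun A : set T => fun x => M0 x \/ A x).
  destruct (@classical_sets.Zorn_bigcup T (fun A => F (above A))) as [A [FA Amax]].
  - intros C CF Ctot.
    destruct (classic (exists A, C A)) as [[A0 CA0]|Cempty].
    + replace (above (classical_sets.bigcup C (fun X => X)))
        with (union (fun B => exists A, C A /\ B = above A)).
      * apply Fchain.
        -- intros B [A [CA ->]]. exact (CF A CA).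
        -- exists (above A0). eauto.
        -- intros B B' [A [CA ->]] [A' [CA' ->]].
           destruct (Ctot A A' CA CA') as [H|H]; [left|right];
             intros x [Hx|Hx]; ((now left) || (right; now apply H)).
      * apply set_ext.
        -- intros x [B [[A [CA ->]] [Hx|Hx]]]; [now left|right; exists A; auto].
        -- intros x [Hx|[A CA Hx]].
           ++ exists (above A0). split; [eauto|now left].
           ++ exists (above A). split; [eauto|now right].
    + replace (above (classical_sets.bigcup C (fun X => X))) with M0; [exact FM0|].
      apply set_ext; [intros x Hx; now left|].
      intros x [Hx|[A CA _]]; [exact Hx|exfalso; eauto].
  - exists (above A). split; [exact FA|split; [intros x Hx; now left|]].
    intros N FN AN. apply NNPP. intro NA. apply (Amax N).
    + split; [intros x Ax; apply AN; now right|].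
      intro H. apply NA. intros x Nx. right. now apply H.
    + replace (above N) with N; [exact FN|].
      apply set_ext; [intros x Nx; now right|].
      intros x [Hx|Hx]; [apply AN; now left|exact Hx].
Qed.

Definition partial_injection {A B} (P : set A) (Q : set B) (G : set (A * B)) : Prop :=
  (forall a b, G (a, b) -> P a /\ Q b) /\
  (forall a b b', G (a, b) -> G (a, b') -> b = b') /\
  (forall a a' b, G (a, b) -> G (a', b) -> a = a').

Lemma partial_injection_chain {A B} (P : set A) (Q : set B) (C : set (set (A * B))) :
  (forall G, C G -> partial_injection P Q G) -> chain C ->
  partial_injection P Q (union C).
Proof.
  intros CG Cch. split; [|split].
  - intros a b [G [CGG Gab]]. exact (proj1 (CG G CGG) a b Gab).
  - intros a b b' [G [HG Gb]] [G' [HG' Gb']].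
    destruct (Cch G G' HG HG') as [S|S].
    + apply (proj1 (proj2 (CG G' HG')) a); auto.
    + apply (proj1 (proj2 (CG G HG)) a); auto.
  - intros a a' b [G [HG Ga]] [G' [HG' Ga']].
    destruct (Cch G G' HG HG') as [S|S].
    + apply (proj2 (proj2 (CG G' HG')) a a' b); auto.
    + apply (proj2 (proj2 (CG G HG)) a a' b); auto.
Qed.

Lemma maximal_partial_injection {A B} (P : set A) (Q : set B) (M : set (A * B)) :
  partial_injection P Q M ->
  (forall N, partial_injection P Q N -> sub M N -> sub N M) ->
  (forall a, P a -> exists b, M (a, b)) \/ (forall b, Q b -> exists a, M (a, b)).
Proof.
  intros [MPQ [Mfun Minj]] Mmax. apply NNPP. intro H.
  apply not_or_and in H. destruct H as [Hdom Hran].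
  apply not_all_ex_not in Hdom. destruct Hdom as [a Ha].
  apply imply_to_and in Ha. destruct Ha as [Pa Ha].
  apply not_all_ex_not in Hran. destruct Hran as [b Hb].
  apply imply_to_and in Hb. destruct Hb as [Qb Hb].
  assert (Hext : partial_injection P Q (fun p => M p \/ p = (a, b))).
  { split; [|split].
    - intros a' b' [H|H]; [auto|injection H as -> ->; auto].
    - intros a' b1 b2 [H1|H1] [H2|H2]; [eauto| | |];
        [injection H2 as -> ->| injection H1 as -> ->| congruence];
        exfalso; eauto.
    - intros a1 a2 b' [H1|H1] [H2|H2]; [eauto| | |];
        [injection H2 as -> ->| injection H1 as -> ->| congruence];
        exfalso; eauto. }
  apply Hb. exists a. apply (Mmax _ Hext); [intros p Hp; now left|now right].
Qed.

Lemma comparability {A B} (a0 : A) (b0 : B) (P : set A) (Q : set B) :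
  (exists f : A -> B, (forall a, P a -> Q (f a)) /\ inj_on P f) \/
  (exists g : B -> A, (forall b, Q b -> P (g b)) /\ inj_on Q g).
Proof.
  destruct (zorn_above (partial_injection P Q) (fun _ => False)) as [M [HM [_ Mmax]]].
  - split; [|split]; intros; contradiction.
  - intros C CG _ Cch. exact (partial_injection_chain P Q C CG Cch).
  - pose proof HM as [MPQ [Mfun Minj]].
    destruct (maximal_partial_injection P Q M HM Mmax) as [Hdom|Hran]; [left|right].
    + destruct (choice_on b0 P (fun a b => M (a, b)) Hdom) as [f Hf].
      exists f. split; [intros a Pa; exact (proj2 (MPQ a _ (Hf a Pa)))|].
      intros x y Px Py Exy. apply (Minj x y (f y)); [rewrite <- Exy|]; auto.
    + destruct (choice_on a0 Q (fun b a => M (a, b)) Hran) as [g Hg].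
      exists g. split; [intros b Qb; exact (proj1 (MPQ _ b (Hg b Qb)))|].
      intros x y Qx Qy Exy. apply (Mfun (g y) x y); [rewrite <- Exy|]; auto.
Qed.

Definition pairing_on {I} (D : set I) (F : I -> I -> I) : Prop :=
  (forall u v, D u -> D v -> D (F u v)) /\
  (forall u v u' v', D u -> D v -> D u' -> D v' -> F u v = F u' v' -> u = u' /\ v = v').

(* If [D] carries a pairing and two distinct points, then any [S] whose part
   outside [D] injects into [D] injects into [D] as a whole (|S| <= 2|D| <= |D|). *)
Lemma absorb_into_pairing {I} (D S : set I) (F : I -> I -> I) (a0 a1 : I) (g : I -> I) :
  pairing_on D F -> D a0 -> D a1 -> a0 <> a1 ->
  (forall x, S x -> ~ D x -> D (g x)) -> inj_on (fun x => S x /\ ~ D x) g ->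
  exists phi : I -> I, (forall x, S x -> D (phi x)) /\ inj_on S phi.
Proof.
  intros [FD Finj] Da0 Da1 a01 gD ginj.
  exists (fun x => if excluded_middle_informative (D x) then F a0 x else F a1 (g x)).
  split.
  - intros x Sx. destruct (excluded_middle_informative (D x)); auto.
  - intros x y Sx Sy E.
    destruct (excluded_middle_informative (D x)) as [Dx|Dx];
      destruct (excluded_middle_informative (D y)) as [Dy|Dy];
      apply Finj in E; auto; destruct E as [E1 E2].
    + exact E2.
    + now contradiction a01.
    + now contradiction a01.
    + apply ginj; [split|split|]; assumption.
Qed.

Lemma absorb_image {I} (D : set I) (F : I -> I -> I) (a0 a1 : I) (h : I -> I) :
  pairing_on D F -> D a0 -> D a1 -> a0 <> a1 -> inj_on D h ->
  exists phi : I -> I,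
    (forall x, D x \/ (exists d, D d /\ h d = x) -> D (phi x)) /\
    inj_on (fun x => D x \/ exists d, D d /\ h d = x) phi.
Proof.
  intros HF Da0 Da1 a01 hinj.
  set (B := fun x => exists d, D d /\ h d = x).
  destruct (choice_on a0 B (fun x d => D d /\ h d = x) (fun x Bx => Bx)) as [g Hg].
  apply (absorb_into_pairing D (fun x => D x \/ B x) F a0 a1 g HF Da0 Da1 a01).
  - intros x [Dx|Bx] nDx; [contradiction|exact (proj1 (Hg x Bx))].
  - intros x y [[Dx|Bx] nDx] [[Dy|By] nDy] E; try contradiction.
    rewrite <- (proj2 (Hg x Bx)), <- (proj2 (Hg y By)), E. reflexivity.
Qed.

(* Keep [injection] from unfolding the Cantor pairing [to_nat]. *)
Local Opaque to_nat.

Section Hessenberg.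
Variable I : Type.
Variable e : nat -> I.
Hypothesis e_inj : injective e.

Definition graph_dom (G : set (I * I * I)) (x : I) : Prop := exists z, G (x, x, z).

(* [G] is the graph of an injection [D x D -> D], where [D] is its domain. *)
Definition square_embedding (G : set (I * I * I)) : Prop :=
  (forall x y z z', G (x, y, z) -> G (x, y, z') -> z = z') /\
  (forall x y z x' y', G (x, y, z) -> G (x', y', z) -> x = x' /\ y = y') /\
  (forall x y z, G (x, y, z) -> graph_dom G x /\ graph_dom G y /\ graph_dom G z) /\
  (forall x y, graph_dom G x -> graph_dom G y -> exists z, G (x, y, z)).

Definition nat_graph : set (I * I * I) :=
  fun p => exists n m, p = (e n, e m, e (to_nat (n, m))).

Lemma nat_graph_dom n : graph_dom nat_graph (e n).
Proof. exists (e (to_nat (n, n))). now exists n, n. Qed.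

Lemma square_embedding_nat_graph : square_embedding nat_graph.
Proof.
  split; [|split; [|split]].
  - intros x y z z' [n [m H]] [n' [m' H']].
    injection H as -> -> ->. injection H' as E1 E2 ->.
    apply e_inj in E1. apply e_inj in E2. now subst.
  - intros x y z x' y' [n [m H]] [n' [m' H']].
    injection H as -> -> ->. injection H' as -> -> E.
    apply e_inj, to_nat_inj in E. now injection E as -> ->.
  - intros x y z [n [m H]]. injection H as -> -> ->.
    split; [|split]; apply nat_graph_dom.
  - intros x y [w [n [m H]]] [w' [n' [m' H']]].
    injection H as -> _ _. injection H' as -> _ _.
    exists (e (to_nat (n, n'))). now exists n, n'.
Qed.

Lemma square_embedding_chain (C : set (set (I * I * I))) :
  (forall G, C G -> square_embedding G) -> chain C -> square_embedding (union C).
Proof.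
  intros CG Cch.
  assert (common : forall G G', C G -> C G' ->
            exists L, C L /\ sub G L /\ sub G' L).
  { intros G G' HG HG'. destruct (Cch G G' HG HG') as [S|S].
    - exists G'. repeat split; auto. intros p; auto.
    - exists G. repeat split; auto. intros p; auto. }
  split; [|split; [|split]].
  - intros x y z z' [G [HG H]] [G' [HG' H']].
    destruct (common G G' HG HG') as [L [HL [S1 S2]]].
    apply (proj1 (CG L HL) x y); auto.
  - intros x y z x' y' [G [HG H]] [G' [HG' H']].
    destruct (common G G' HG HG') as [L [HL [S1 S2]]].
    apply (proj1 (proj2 (CG L HL)) x y z); auto.
  - intros x y z [G [HG H]].
    destruct (proj1 (proj2 (proj2 (CG G HG))) x y z H) as [[w1 H1] [[w2 H2] [w3 H3]]].
    split; [|split]; [exists w1 | exists w2 | exists w3]; exists G; auto.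
  - intros x y [w [G [HG H]]] [w' [G' [HG' H']]].
    destruct (common G G' HG HG') as [L [HL [S1 S2]]].
    destruct (proj2 (proj2 (proj2 (CG L HL))) x y) as [z Hz];
      [exists w; auto | exists w'; auto |].
    exists z, L; auto.
Qed.

Lemma square_embedding_pairing (G : set (I * I * I)) :
  square_embedding G -> exists F, pairing_on (graph_dom G) F.
Proof.
  intros [Gfun [Ginj [Gdom Gtot]]].
  destruct (choice (fun (uv : I * I) z => graph_dom G (fst uv) -> graph_dom G (snd uv) ->
                      G (fst uv, snd uv, z))) as [F HF].
  { intros [u v]. destruct (classic (graph_dom G u /\ graph_dom G v)) as [[Du Dv]|H].
    - destruct (Gtot u v Du Dv) as [z Hz]. now exists z.
    - exists u. intros Du Dv. exfalso. auto. }
  exists (fun u v => F (u, v)). split.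
  - intros u v Du Dv. exact (proj2 (proj2 (Gdom u v _ (HF (u, v) Du Dv)))).
  - intros u v u' v' Du Dv Du' Dv' E.
    apply (Ginj u v (F (u, v))); [exact (HF (u, v) Du Dv)|].
    rewrite E. exact (HF (u', v') Du' Dv').
Qed.

Definition new_pair (M : set (I * I * I)) (Dn : set I) (x y : I) : Prop :=
  Dn x /\ Dn y /\ ~ (graph_dom M x /\ graph_dom M y).

Lemma square_embedding_enlarge (M : set (I * I * I)) (Dn : set I) (c : I -> I -> I) :
  square_embedding M -> (forall x, graph_dom M x -> Dn x) ->
  (forall x y, new_pair M Dn x y -> Dn (c x y) /\ ~ graph_dom M (c x y)) ->
  (forall x y x' y', new_pair M Dn x y -> new_pair M Dn x' y' ->
     c x y = c x' y' -> x = x' /\ y = y') ->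
  square_embedding (fun p => let '(x, y, z) := p in
                      M (x, y, z) \/ (new_pair M Dn x y /\ z = c x y)).
Proof.
  intros [Mfun [Minj [Mdom Mtot]]] DDn cnew cinj.
  set (N := fun p : I * I * I => let '(x, y, z) := p in
              M (x, y, z) \/ (new_pair M Dn x y /\ z = c x y)).
  assert (domN : forall x, Dn x <-> graph_dom N x).
  { intro x. split.
    - intro Dnx. destruct (classic (graph_dom M x)) as [[w Hw]|nDx].
      + exists w. now left.
      + exists (c x x). right. repeat split; auto. intros [Dx _]; auto.
    - intros [w [H|[[Dnx _] _]]]; [apply DDn; exact (proj1 (Mdom _ _ _ H))|exact Dnx]. }
  split; [|split; [|split]].
  - intros x y z z' [H|[Hxy ->]] [H'|[Hxy' ->]]; eauto.
    + destruct (Mdom _ _ _ H) as [Dx [Dy _]]. destruct Hxy' as [_ [_ []]]; auto.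
    + destruct (Mdom _ _ _ H') as [Dx [Dy _]]. destruct Hxy as [_ [_ []]]; auto.
  - intros x y z x' y' [H|[Hxy ->]] [H'|[Hxy' E]]; [eauto| | |auto].
    + exfalso. apply (proj2 (cnew x' y' Hxy')). rewrite <- E.
      exact (proj2 (proj2 (Mdom _ _ _ H))).
    + exfalso. apply (proj2 (cnew x y Hxy)). exact (proj2 (proj2 (Mdom _ _ _ H'))).
  - intros x y z [H|[Hxy ->]].
    + destruct (Mdom _ _ _ H) as [Dx [Dy Dz]]. split; [|split]; apply domN, DDn; auto.
    + split; [|split]; apply domN; [apply Hxy|apply Hxy|apply (cnew x y Hxy)].
  - intros x y Nx Ny. apply domN in Nx. apply domN in Ny.
    destruct (classic (graph_dom M x /\ graph_dom M y)) as [[Dx Dy]|Hn].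
    + destruct (Mtot x y Dx Dy) as [z Hz]. exists z. now left.
    + exists (c x y). right. repeat split; auto.
Qed.

(* A square embedding whose domain [D] has two points and injects into its
   complement is not maximal: it extends to [D] together with a copy of [D]. *)
Lemma square_embedding_extend (M : set (I * I * I)) (a0 a1 : I) (h : I -> I) :
  square_embedding M -> graph_dom M a0 -> graph_dom M a1 -> a0 <> a1 ->
  (forall d, graph_dom M d -> ~ graph_dom M (h d)) -> inj_on (graph_dom M) h ->
  exists N, square_embedding N /\ sub M N /\ ~ sub N M.
Proof.
  intros HM Da0 Da1 a01 hout hinj.
  destruct (square_embedding_pairing M HM) as [F [FD Finj]].
  set (Dn := fun x => graph_dom M x \/ exists d, graph_dom M d /\ h d = x).
  destruct (absorb_image (graph_dom M) F a0 a1 h (conj FD Finj) Da0 Da1 a01 hinj)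
    as [phi [phiD phiinj]].
  set (code := fun x y => h (F (phi x) (phi y))).
  assert (codeD : forall x y, new_pair M Dn x y -> graph_dom M (F (phi x) (phi y))).
  { intros x y [Dnx [Dny _]]. exact (FD _ _ (phiD x Dnx) (phiD y Dny)). }
  exists (fun p => let '(x, y, z) := p in M (x, y, z) \/ (new_pair M Dn x y /\ z = code x y)).
  split; [|split].
  - apply square_embedding_enlarge; [exact HM|intros x Dx; now left| |].
    + intros x y Hxy. split; [right; eexists; split; [exact (codeD x y Hxy)|reflexivity]|].
      exact (hout _ (codeD x y Hxy)).
    + intros x y x' y' Hxy Hxy' E.
      apply hinj in E; [|exact (codeD _ _ Hxy)|exact (codeD _ _ Hxy')].
      destruct Hxy as [Dnx [Dny _]]. destruct Hxy' as [Dnx' [Dny' _]].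
      apply Finj in E; [|apply phiD; assumption ..].
      destruct E as [E1 E2]. split; apply phiinj; assumption.
  - intros [[x y] z] Mp. now left.
  - (* the pair [(h a0, h a0)] is new *)
    intro NM. set (b := h a0).
    assert (Dnb : Dn b) by (right; exists a0; auto).
    destruct HM as [_ [_ [Mdom _]]].
    assert (Mbb : M (b, b, code b b)).
    { apply NM. right. repeat split; auto. intros [Db _]. exact (hout a0 Da0 Db). }
    exact (hout a0 Da0 (proj1 (Mdom _ _ _ Mbb))).
Qed.

(* A maximal square embedding above [nat_graph] has a domain [D] whose
   complement is smaller than [D] (otherwise it extends), so [I] itself
   injects into [D], and [I x I] into [D x D]. *)
Theorem hessenberg : exists g : I * I -> I, injective g.
Proof.
  destruct (zorn_above square_embedding nat_graph square_embedding_nat_graph)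
    as [M [HM [baseM Mmax]]].
  { intros C CG _ Cch. exact (square_embedding_chain C CG Cch). }
  assert (eD : forall n, graph_dom M (e n)).
  { intro n. destruct (nat_graph_dom n) as [w Hw]. exists w. exact (baseM _ Hw). }
  assert (e01 : e 0 <> e 1) by (intro E; apply e_inj in E; discriminate).
  destruct (square_embedding_pairing M HM) as [F [FD Finj]].
  destruct (comparability (e 0) (e 0) (fun x => ~ graph_dom M x) (graph_dom M))
    as [[f [fD finj]]|[h [hout hinj]]].
  - destruct (absorb_into_pairing (graph_dom M) (fun _ => True) F (e 0) (e 1) f
                (conj FD Finj) (eD 0) (eD 1) e01) as [phi [phiD phiinj]].
    + intros x _ nDx. exact (fD x nDx).
    + intros x y [_ nDx] [_ nDy]. exact (finj x y nDx nDy).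
    + exists (fun p => F (phi (fst p)) (phi (snd p))).
      intros [x y] [x' y'] E. apply Finj in E; [|apply phiD; trivial ..].
      destruct E as [E1 E2]. f_equal; apply phiinj; easy.
  - destruct (square_embedding_extend M (e 0) (e 1) h HM (eD 0) (eD 1) e01 hout hinj)
      as [N [HN [MN NM]]].
    contradiction (NM (Mmax N HN MN)).
Qed.
End Hessenberg.

Definition uncountable (I : Type) : Prop := ~ exists c : I -> nat, injective c.

Lemma uncountable_nat_embedding {I} (i0 : I) :
  uncountable I -> exists e : nat -> I, injective e.
Proof.
  intro Iunc.
  destruct (comparability 0 i0 (fun _ => True) (fun _ => True)) as [[e [_ einj]]|[c [_ cinj]]].
  - exists e. intros n m E. now apply einj.
  - contradiction Iunc. exists c. intros i j E. now apply cinj.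
Qed.

Lemma uncountable_product_embedding {I} (i0 : I) :
  uncountable I -> exists q : I * nat * I * I -> I, injective q.
Proof.
  intro Iunc.
  destruct (uncountable_nat_embedding i0 Iunc) as [e einj].
  destruct (hessenberg I e einj) as [g ginj].
  exists (fun p => match p with (a, n, b, c) => g (g (a, e n), g (b, c)) end).
  intros [[[a n] b] c] [[[a' n'] b'] c'] E.
  apply ginj in E. injection E as E1 E2.
  apply ginj in E1. apply ginj in E2. injection E1 as -> En. injection E2 as -> ->.
  apply einj in En. now subst.
Qed.

Lemma union_of_countable_embedding {I T} (i0 : I) (P : set T) (S : I -> set T) :
  (forall a, countable_set (S a)) -> (forall y, P y -> exists a, S a y) ->
  exists k : T -> I * nat, inj_on P k.
Proof.
  intros Scount Pcov.
  destruct (choice_on i0 P (fun y a => S a y) Pcov) as [a Ha].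
  destruct (choice (fun a c => forall x y, S a x -> S a y -> c x = c y -> x = y) Scount)
    as [c Hc].
  exists (fun y => (a y, c (a y) y)).
  intros y y' Py Py' E. injection E as Ea Ec.
  rewrite <- Ea in Ec. apply (Hc (a y)); auto. rewrite Ea. auto.
Qed.

Lemma omega1_embedding {I T} (i0 : I) (P : set T) :
  uncountable I -> card_le_omega1 P -> exists k : T -> I, inj_on P k.
Proof.
  intros Iunc [R [_ [_ [Rtot [_ Rcount]]]]].
  destruct (classic (exists t0, P t0)) as [[t0 Pt0]|Pempty].
  2: { exists (fun _ => i0). intros x y Px. exfalso. eauto. }
  destruct (comparability t0 i0 P (fun _ => True)) as [[f [_ finj]]|[h [hP hinj]]].
  { now exists f. }
  (* Otherwise [I] embeds into [P] via [h]; the sets [upto a] of points of [P]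
     up to [h a] are countable, and they cover [P] since [I] is uncountable. *)
  set (upto := fun a y => P y /\ (y = h a \/ R y (h a))).
  assert (upto_count : forall a, countable_set (upto a)).
  { intro a. destruct (Rcount (h a) (hP a Logic.I)) as [c Hc].
    exists (fun y => if excluded_middle_informative (y = h a) then 0 else S (c y)).
    intros x y [Px Hx] [Py Hy].
    destruct (excluded_middle_informative (x = h a)) as [->|nx];
      destruct (excluded_middle_informative (y = h a)) as [->|ny];
      intro E; try discriminate; [reflexivity|].
    injection E as E. apply Hc; [split; tauto ..|exact E]. }
  assert (upto_cover : forall y, P y -> exists a, upto a y).
  { intros y Py. apply NNPP. intro Hn. apply Iunc.
    assert (below : forall a, P (h a) /\ R (h a) y).
    { intro a. split; [exact (hP a Logic.I)|].
      destruct (Rtot (h a) y (hP a Logic.I) Py) as [E|[E|E]]; [|exact E|];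
        exfalso; apply Hn; exists a; split; auto. }
    destruct (Rcount y Py) as [c Hc]. exists (fun a => c (h a)).
    intros a b E. apply hinj; trivial. apply Hc; auto. }
  destruct (union_of_countable_embedding i0 P upto upto_count upto_cover) as [k kinj].
  destruct (uncountable_product_embedding i0 Iunc) as [q qinj].
  exists (fun y => q (fst (k y), snd (k y), i0, i0)).
  intros x y Px Py E. apply qinj in E. injection E as E1 E2.
  apply kinj; trivial. now apply injective_projections.
Qed.

Section Space.
Variable X : Type.
Variable t : topology X.

Definition isolated (x : X) : Prop :=
  exists O, open t O /\ O x /\ forall y, O y -> y = x.

Lemma open_of_local (S : set X) :
  (forall x, S x -> exists O, open t O /\ O x /\ sub O S) -> open t S.
Proof.
  intro H.
  replace S with (fun x => exists U, (fun U => open t U /\ sub U S) U /\ U x).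
  - apply open_union. intros U [HU _]. exact HU.
  - apply set_ext.
    + intros x [U [[_ US] Ux]]. exact (US x Ux).
    + intros x Sx. destruct (H x Sx) as [O [HO [Ox OS]]]. exists O. auto.
Qed.

Lemma closed_closure (C : set X) x : closed t C -> closure t C x -> C x.
Proof.
  intros HC Cx. apply NNPP. intro nCx.
  destruct (Cx _ HC nCx) as [y [nCy Cy]]. contradiction.
Qed.

Lemma baire_somewhere_dense {J} (c : J -> nat) (S : J -> set X) (x0 : X) :
  baire t -> injective c -> (forall x, exists j, S j x) ->
  exists j U x, open t U /\ U x /\ sub U (closure t (S j)).
Proof.
  intros Hbaire cinj Scov.
  set (away := fun k x => forall j, c j = k ->
                 exists O, open t O /\ O x /\ forall y, O y -> ~ S j y).
  assert (away_open : forall k, open t (away k)).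
  { intro k. apply open_of_local. intros x Hx.
    destruct (classic (exists j, c j = k)) as [[j <-]|Hk].
    - destruct (Hx j eq_refl) as [O [HO [Ox HOS]]].
      exists O. repeat split; auto. intros y Oy j' E.
      apply cinj in E. subst j'. exists O. auto.
    - exists (fun _ => True). repeat split; [apply open_full|].
      intros y _ j E. exfalso. eauto. }
  assert (Hnd : ~ forall k, dense t (away k)).
  { intro Hd.
    destruct (Hbaire away away_open Hd x0 (fun _ => True) (open_full _ t) Logic.I)
      as [y [_ Hy]].
    destruct (Scov y) as [j Sy].
    destruct (Hy (c j) j eq_refl) as [O [_ [Oy HO]]]. exact (HO y Oy Sy). }
  apply not_all_ex_not in Hnd. destruct Hnd as [k Hk].
  unfold dense, closure in Hk. apply not_all_ex_not in Hk. destruct Hk as [x Hx].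
  apply not_all_ex_not in Hx. destruct Hx as [U Hx].
  apply imply_to_and in Hx. destruct Hx as [HU Hx].
  apply imply_to_and in Hx. destruct Hx as [Ux Hnaway].
  destruct (classic (exists j, c j = k)) as [[j <-]|Hk].
  2: { exfalso. apply Hnaway. exists x. split; [exact Ux|]. intros j E. exfalso. eauto. }
  exists j, U, x. repeat split; [exact HU|exact Ux|].
  intros y Uy O HO Oy. apply NNPP. intro Hn. apply Hnaway.
  exists y. split; [exact Uy|]. intros j' E. apply cinj in E. subst j'.
  exists O. repeat split; auto. intros z Oz Sz. apply Hn. eauto.
Qed.

Lemma closed_discrete_somewhere_dense (D : set X) (U : set X) x :
  closed_discrete t D -> open t U -> U x -> sub U (closure t D) -> isolated x.
Proof.
  intros [Dclosed Ddisc] HU Ux UD.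
  destruct (Ddisc x (closed_closure D x Dclosed (UD x Ux))) as [W [HW [Wx WD]]].
  exists (fun y => U y /\ W y). repeat split; [apply open_inter; auto|auto|auto|].
  intros y [Uy Wy]. exact (WD y Wy (closed_closure D y Dclosed (UD y Uy))).
Qed.

Section Labelling.
Variable I : Type.
Variables (ix : X -> I) (nx : X -> nat).

Definition level_discrete : Prop :=
  forall z m, exists W, open t W /\ W z /\
    forall x y, W x -> W y -> nx x = m -> nx y = m -> ix x = ix y -> x = y.

Definition level_set (i : I) (m : nat) : set X := fun x => ix x = i /\ nx x = m.

Lemma level_set_closed_discrete i m :
  hausdorff t -> level_discrete -> closed_discrete t (level_set i m).
Proof.
  intros Hhaus Hlev. split.
  - apply open_of_local. intros z nEz.
    destruct (Hlev z m) as [W [HW [Wz Wuniq]]].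
    destruct (classic (exists x, W x /\ level_set i m x)) as [[x [Wx [ix_x nx_x]]]|Hn].
    + assert (zx : z <> x) by (intros ->; apply nEz; split; auto).
      destruct (Hhaus z x zx) as [U [V [HU [HV [Uz [Vx UV]]]]]].
      exists (fun y => W y /\ U y). repeat split; [apply open_inter; auto|auto|auto|].
      intros y [Wy Uy] [ix_y nx_y].
      assert (y = x) as -> by (apply Wuniq; congruence).
      exact (UV x (conj Uy Vx)).
    + exists W. repeat split; auto. intros y Wy Ey. apply Hn. eauto.
  - intros x [ix_x nx_x]. destruct (Hlev x m) as [W [HW [Wx Wuniq]]].
    exists W. repeat split; auto.
    intros y Wy [ix_y nx_y]. apply Wuniq; congruence.
Qed.

Lemma countable_labels_isolated (x0 : X) :
  hausdorff t -> baire t -> level_discrete -> (exists c : I -> nat, injective c) ->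
  exists x, isolated x.
Proof.
  intros Hhaus Hbaire Hlev [c cinj].
  destruct (baire_somewhere_dense (fun p => to_nat (c (fst p), snd p))
              (fun p => level_set (fst p) (snd p)) x0 Hbaire) as [[i m] [U [x [HU [Ux UE]]]]].
  - intros [i m] [i' m'] E. apply to_nat_inj in E. injection E as E ->.
    apply cinj in E. now subst.
  - intro y. exists (ix y, nx y). split; reflexivity.
  - exists x. exact (closed_discrete_somewhere_dense _ U x
                       (level_set_closed_discrete i m Hhaus Hlev) HU Ux UE).
Qed.

Definition omega1_expansion (D : set X) (V : X -> set X) : Prop :=
  (forall d, D d -> open t (V d)) /\
  (forall d, D d -> forall y, (V d y /\ D y) <-> y = d) /\
  (forall x, card_le_omega1 (fun d => D d /\ V d x)).

(* With uncountably many labels, Baire's theorem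
   gives a level [m] dense in an open set [U]; shrink [U] to [O] so that [O]
   contains at most one point of level [m] per label.  A point [y] of [O] is
   then coded by its labels, the label of a level-[m] point [s y] of [O] in the
   expansion of [y]'s level set around [y], and the position of [y] among the
   at most omega_1 members of that expansion containing [s y]. *)
Lemma uncountable_labels_small_open (x0 : X) (i0 : I) :
  hausdorff t -> baire t -> omega1_expandable t -> level_discrete -> uncountable I ->
  exists O, open t O /\ (exists x, O x) /\ exists f : X -> I, inj_on O f.
Proof.
  intros Hhaus Hbaire Hexp Hlev Iunc.
  destruct (baire_somewhere_dense (fun m : nat => m) (fun m y => nx y = m) x0 Hbaire)
    as [m [U [x [HU [Ux Udense]]]]]; [intros a b E; exact E|intro y; now exists (nx y)|].
  destruct (Hlev x m) as [W [HW [Wx Wuniq]]].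
  set (O := fun y => U y /\ W y).
  destruct (choice (fun (p : I * nat) V => omega1_expansion (level_set (fst p) (snd p)) V))
    as [V HV].
  { intros [i k]. apply Hexp, level_set_closed_discrete; assumption. }
  assert (Vself : forall y, open t (V (ix y, nx y) y) /\ V (ix y, nx y) y y).
  { intro y. destruct (HV (ix y, nx y)) as [Vopen [Viso _]].
    split; [apply Vopen; split; reflexivity|].
    apply (Viso y (conj eq_refl eq_refl) y). reflexivity. }
  destruct (choice_on x0 O (fun y s => O s /\ V (ix y, nx y) y s /\ nx s = m)) as [s Hs].
  { intros y Oy. destruct (Vself y) as [HVy Vy].
    destruct (Udense y (proj1 Oy) (fun z => O z /\ V (ix y, nx y) y z))
      as [z [[Oz Vz] nx_z]]; [repeat apply open_inter; assumption|split; assumption|].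
    exists z. auto. }
  destruct (choice (fun (p : X * (I * nat)) (k : X -> I) =>
              inj_on (fun d => level_set (fst (snd p)) (snd (snd p)) d /\ V (snd p) d (fst p)) k))
    as [kappa Hkappa].
  { intros [z p]. apply (omega1_embedding i0); [exact Iunc|apply (HV p)]. }
  destruct (uncountable_product_embedding i0 Iunc) as [q qinj].
  exists O. split; [apply open_inter; assumption|split; [exists x; split; assumption|]].
  exists (fun y => q (ix y, nx y, ix (s y), kappa (s y, (ix y, nx y)) y)).
  intros y y' Oy Oy' E. apply qinj in E. injection E as Ei En Eis Ek.
  destruct (Hs y Oy) as [[_ Ws] [Vs ms]]. destruct (Hs y' Oy') as [[_ Ws'] [Vs' ms']].
  assert (Es : s y = s y') by (apply Wuniq; assumption).
  rewrite <- Es, <- Ei, <- En in Ek.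
  apply (Hkappa (s y, (ix y, nx y))); [split; [split|]; auto ..|exact Ek].
  rewrite Ei, En, Es. exact Vs'.
Qed.

End Labelling.

(* A sigma-discrete network turns a cover by discrete subspaces into a
   level-discrete labelling: [x] gets the index of a piece [A i] containing it
   and the level of a network element around [x] that isolates [x] in [A i]. *)
Lemma sigma_space_labelling {I} (A : I -> set X) :
  sigma_space t -> (forall i, discrete_subspace t (A i)) -> (forall x, exists i, A i x) ->
  exists (ix : X -> I) (nx : X -> nat), level_discrete I ix nx.
Proof.
  intros [Fn [Fdisc Fnet]] Adisc Acov.
  destruct (choice (fun x i => A i x) Acov) as [ix Aix].
  destruct (choice (fun x (p : nat * set X) => Fn (fst p) (snd p) /\ snd p x /\
                      forall y, snd p y -> A (ix x) y -> y = x)) as [net Hnet].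
  { intro x. destruct (Adisc (ix x) x (Aix x)) as [U [HU [Ux Uiso]]].
    destruct (Fnet U x HU Ux) as [N [[n Nn] [Nx NU]]].
    exists (n, N). simpl. auto. }
  exists ix, (fun x => fst (net x)).
  intros z m. destruct (Fdisc m z) as [W [HW [Wz Wdisc]]].
  exists W. repeat split; auto.
  intros x y Wx Wy nx_x nx_y Eix.
  destruct (Hnet x) as [Nx [xNx Nx_iso]]. destruct (Hnet y) as [Ny [yNy _]].
  rewrite nx_x in Nx. rewrite nx_y in Ny.
  assert (Enet : snd (net x) = snd (net y)).
  { apply (Wdisc _ _ Nx Ny); [exists x | exists y]; auto. }
  symmetry. apply Nx_iso; [rewrite Enet; exact yNy|rewrite Eix; apply Aix].
Qed.

End Space.

Theorem theorem2 (X : Type) (t : topology X) :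
  inhabited X -> hausdorff t -> regular t -> omega1_expandable t ->
  baire t -> sigma_space t -> dis_ge_Delta t.
Proof.
  intros [x0] Hhaus _ Hexp Hbaire Hsigma I A Adisc Acov.
  destruct (Acov x0) as [i0 _].
  destruct (sigma_space_labelling X t A Hsigma Adisc Acov) as [ix [nx Hlev]].
  destruct (classic (exists x, isolated X t x)) as [[x [O [HO [Ox Oiso]]]]|noiso].
  -
    exists O. split; [exact HO|split; [now exists x|]].
    exists (fun _ => i0). intros y y' Oy Oy' _. now rewrite (Oiso y Oy), (Oiso y' Oy').
  - destruct (classic (exists c : I -> nat, injective c)) as [Icount|Iunc].
    + contradiction (noiso (countable_labels_isolated X t I ix nx x0 Hhaus Hbaire Hlev Icount)).
    + exact (uncountable_labels_small_open X t I ix nx x0 i0 Hhaus Hbaire Hexp Hlev Iunc).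
Qed.
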